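(* Let $1<p\le2$, $T>0$, and let $\gamma_0,\gamma_1,\gamma_2,\gamma_3,\Lambda>0$ and $\theta\in(0,1]$ be given. Then there exist $\bar k\in(0,1]$, $\bar\gamma_0>0$ and $\gamma_4,\gamma_5>0$ (independent of $\lambda$) such that the following holds. Let $M\in\mathbb N$, $k=T/M\in(0,\bar k)$, $h\in(0,1/\sqrt{\gamma_0})$ with $h^2<\bar\gamma_0 k$, $\lambda\in[0,\Lambda]$, and let $(a_m)_{m=0}^M,(b_m)_{m=0}^M$ be non-negative sequences and $(r_m)_{m=0}^M,(s_m)_{m=0}^M$ sequences with $$a_0^2\le\gamma_0h^2,\quad b_0^2\le\gamma_0h^2,\quad k\sum_{m=0}^Mr_m^2\le\gamma_0h^2,\quad k\sum_{m=0}^Ms_m^2\le\gamma_0h^2,$$ and such that for all $1\le m\le M$ $$\frac{a_m^2-a_{m-1}^2}{k}+\gamma_1(\lambda+b_m)^{p-2}b_m^2\le b_mr_m+\gamma_2b_{m-1}b_m+s_m^2,$$ $$\frac{a_m^2-a_{m-1}^2}{k}+\gamma_1(\lambda+b_m)^{p-2}b_m^2\le b_mr_m+\gamma_3b_mb_{m-1}^{1-\theta}a_m^\theta+s_m^2.$$ Then $\max_{1\le m\le M}b_m\le1$ and $$\max_{1\le m\le M}a_m^2+\gamma_1(\lambda+\Lambda)^{p-2}\,k\sum_{m=1}^Mb_m^2\le\gamma_4h^2\exp(2\gamma_5kM).$$ *)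

From Stdlib Require Import Reals Lra Lia.
Open Scope R_scope.

(* Real power x^y for x >= 0, with the conventions 0^0 = 1 and 0^y = 0 for
   y <> 0.  (Stdlib's Rpower gives Rpower 0 y = 1, which is wrong for y > 0.)
   For y < 0 the value at x = 0 only ever occurs multiplied by b_m^2 = 0. *)
Definition rpow (x y : R) : R :=
  if Req_EM_T x 0 then (if Req_EM_T y 0 then 1 else 0) else Rpower x y.

Fixpoint max_from1 (f : nat -> R) (M : nat) : R :=
  match M with
  | O => f 1%nat
  | S O => f 1%nat
  | S n => Rmax (max_from1 f n) (f M)
  end.

(* Write  beta = g1 (Lam+1)^(p-2).  As long as b_m <= 1, the
   dissipation dominates  beta b_m^2  (coercivity).  The coupling term is
   estimated by the first inequality when  b_{m-1} <= L a_m  and by the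
   second (interpolation) inequality otherwise, where  L^theta = 8 g3/beta;
   Young's inequality then yields the one-step energy inequality
     Y_m + k beta/2 b_m^2 <= Y_{m-1} + k R_m + k Q a_m^2,
   for  Y_m = a_m^2 + k beta/4 b_m^2,  R_m = 4/beta r_m^2 + s_m^2.
   Telescoping and an implicit discrete Gronwall lemma (valid for kQ <= 1/2)
   give  Y_n <= C0 h^2 exp(2 Q k n).  The a priori bound  b_m <= 1  is
   proved simultaneously by induction on m: if  b_m > 1,  the superlinear
   growth of the dissipation forces  a_m  below a threshold  tau,  and then
   the second inequality makes  b_m <= 2/3,  a contradiction. *)

From Stdlib Require Import Reals Lra Lia.
Open Scope R_scope.

Lemma exp_le_mono x y : x <= y -> exp x <= exp y.
Proof. intros [Hlt | ->]; [left; exact (exp_increasing _ _ Hlt) | lra]. Qed.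

Lemma Rpower_pos x e : 0 < Rpower x e.
Proof. exact (exp_pos _). Qed.

Lemma Rpower_one_l e : Rpower 1 e = 1.
Proof. unfold Rpower; rewrite ln_1, Rmult_0_r; exact exp_0. Qed.

Lemma Rpower_antitone e x y : e <= 0 -> 0 < x <= y -> Rpower y e <= Rpower x e.
Proof.
  intros He [Hx Hxy]. unfold Rpower. apply exp_le_mono.
  assert (ln x <= ln y).
  { destruct Hxy as [Hlt | <-]; [left; now apply ln_increasing | lra]. }
  nra.
Qed.

Lemma Rpower_root c t : 0 < c -> t <> 0 -> Rpower (Rpower c (/ t)) t = c.
Proof. intros Hc Ht. rewrite Rpower_mult, Rinv_l by exact Ht. now apply Rpower_1. Qed.

Lemma rpow_of_pos x e : 0 < x -> rpow x e = Rpower x e.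
Proof. intros Hx; unfold rpow; destruct (Req_EM_T x 0); [lra | reflexivity]. Qed.

Lemma rpow_nonneg x e : 0 <= rpow x e.
Proof.
  unfold rpow; destruct (Req_EM_T x 0); [destruct (Req_EM_T e 0); lra | left; apply Rpower_pos].
Qed.

Lemma rpow_zero_l e : e <> 0 -> rpow 0 e = 0.
Proof. intros He; unfold rpow; destruct (Req_EM_T 0 0), (Req_EM_T e 0); lra. Qed.

Lemma rpow_le_one x e : 0 <= x <= 1 -> 0 <= e -> rpow x e <= 1.
Proof.
  intros Hx He. destruct (Req_dec x 0) as [-> | Hx0].
  - unfold rpow; destruct (Req_EM_T 0 0), (Req_EM_T e 0); lra.
  - rewrite rpow_of_pos, <- (Rpower_one_l e) by lra. apply Rle_Rpower_l; lra.
Qed.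

Lemma rpow_le_Rpower x y e : 0 < e -> 0 <= x <= y -> 0 < y -> rpow x e <= Rpower y e.
Proof.
  intros He Hxy Hy. destruct (Req_dec x 0) as [-> | Hx0].
  - rewrite rpow_zero_l by lra. left; apply Rpower_pos.
  - rewrite rpow_of_pos by lra. apply Rle_Rpower_l; lra.
Qed.

(** * Coercivity of the dissipation  (lam + b)^(p-2) b^2  for p <= 2 *)

Section Coercivity.
Variables p Lam lam : R.
Hypotheses (Hp2 : p <= 2) (Hlam : 0 <= lam <= Lam).

Lemma coercive_small b :
  0 <= b <= 1 -> Rpower (Lam + 1) (p - 2) * b ^ 2 <= rpow (lam + b) (p - 2) * b ^ 2.
Proof.
  intros Hb. destruct (Req_dec b 0) as [-> | Hb0]; [lra |].
  rewrite rpow_of_pos by lra. apply Rmult_le_compat_r; [nra |].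
  apply Rpower_antitone; lra.
Qed.

(* Large b: the dissipation grows like b^p = b * b^(p-1). *)
Lemma coercive_large b :
  1 <= b ->
  Rpower (Lam + 1) (p - 2) * (b * Rpower b (p - 1)) <= rpow (lam + b) (p - 2) * b ^ 2.
Proof.
  intros Hb. rewrite rpow_of_pos by lra.
  assert (Hprod : Rpower (Lam + 1) (p - 2) * Rpower b (p - 2) <= Rpower (lam + b) (p - 2)).
  { rewrite Rpower_mult_distr by lra. apply Rpower_antitone; nra. }
  assert (Hsplit : b * Rpower b (p - 1) = Rpower b (p - 2) * b ^ 2).
  { replace (b ^ 2) with (Rpower b 2)
      by (replace 2 with (INR 2) by (simpl; lra); apply Rpower_pow; lra).
    rewrite <- (Rpower_1 b) at 1 by lra. rewrite <- !Rpower_plus. f_equal; ring. }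
  rewrite Hsplit. pose proof (Rpower_pos b (p - 2)). nra.
Qed.

End Coercivity.

Lemma le_div_mul x y z : 0 < z -> x <= y / z -> x * z <= y.
Proof.
  intros Hz H. apply (Rmult_le_compat_r z) in H; [| lra].
  unfold Rdiv in H. rewrite Rmult_assoc, Rinv_l in H by lra. lra.
Qed.

Lemma lt_div_mul x y z : 0 < z -> x < y / z -> x * z < y.
Proof.
  intros Hz H. apply (Rmult_lt_compat_r z) in H; [| lra].
  unfold Rdiv in H. rewrite Rmult_assoc, Rinv_l in H by lra. lra.
Qed.

Lemma young d x y : 0 < d -> x * y <= d / 2 * x ^ 2 + / (2 * d) * y ^ 2.
Proof.
  intros Hd.
  assert (0 <= / (2 * d) * (d * x - y) ^ 2)
    by (apply Rmult_le_pos; [left; apply Rinv_0_lt_compat; lra | apply pow2_ge_0]).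
  replace (d / 2 * x ^ 2 + / (2 * d) * y ^ 2)
    with (x * y + / (2 * d) * (d * x - y) ^ 2) by (field; lra).
  lra.
Qed.

Lemma interpolation_below theta L a b' :
  0 < theta <= 1 -> 0 < L -> 0 <= a -> 0 < b' -> L * a <= b' ->
  rpow b' (1 - theta) * rpow a theta * Rpower L theta <= b'.
Proof.
  intros Ht HL Ha Hb' HLa. destruct (Req_dec a 0) as [-> | Ha0].
  { rewrite rpow_zero_l by lra. lra. }
  rewrite !rpow_of_pos by lra.
  assert (Hpow : Rpower a theta * Rpower L theta <= Rpower b' theta).
  { rewrite Rpower_mult_distr by lra. apply Rle_Rpower_l; nra. }
  assert (Hsplit : Rpower b' (1 - theta) * Rpower b' theta = b').
  { rewrite <- Rpower_plus. replace (1 - theta + theta) with 1 by ring. now apply Rpower_1. }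
  pose proof (Rpower_pos b' (1 - theta)). nra.
Qed.

Lemma superlinear_absorbs p beta C B b :
  1 < p -> 0 < beta -> 0 <= C -> 0 < B -> Rpower B (p - 1) = C / beta -> 0 < b ->
  b * C - beta * (b * Rpower b (p - 1)) <= B * C.
Proof.
  intros Hp Hbeta HC HB HBe Hb. pose proof (Rpower_pos b (p - 1)).
  destruct (Rle_lt_dec b B) as [HbB | HBb].
  - assert (b * C <= B * C) by (apply Rmult_le_compat_r; lra).
    assert (0 <= beta * (b * Rpower b (p - 1))) by (apply Rmult_le_pos; nra). lra.
  - assert (HCb : C <= beta * Rpower b (p - 1)).
    { replace C with (beta * (C / beta)) by (field; lra). rewrite <- HBe.
      apply Rmult_le_compat_l; [lra | apply Rle_Rpower_l; lra]. }
    nra.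
Qed.

(** * One step of the scheme

   Here  a, b  are the current values,  a', b'  the previous ones,
   (a^2 - a'^2)/k  is the discrete time derivative and  D  stands for the
   dissipation  g1 (lam + b)^(p-2) b^2. *)

Section OneStep.
Variables g2 g3 theta k a a' b b' r s D : R.
Hypotheses (Hg2 : 0 < g2) (Hg3 : 0 < g3) (Htheta : 0 < theta <= 1) (Hk : 0 < k)
  (Ha : 0 <= a) (Hb : 0 <= b) (Hb' : 0 <= b').
Hypothesis I1 : (a ^ 2 - a' ^ 2) / k + D <= b * r + g2 * b' * b + s ^ 2.
Hypothesis I2 : (a ^ 2 - a' ^ 2) / k + D
  <= b * r + g3 * b * rpow b' (1 - theta) * rpow a theta + s ^ 2.

(* Choosing the better of the two inequalities: the coupling is bounded by
   a term in  a b  plus a small multiple of  b' b. *)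
Lemma coupling_bound beta L :
  0 < beta -> 0 < L -> Rpower L theta = 8 * g3 / beta ->
  (a ^ 2 - a' ^ 2) / k + D <= b * r + g2 * L * a * b + beta / 8 * b' * b + s ^ 2.
Proof.
  intros Hbeta HL HLe.
  assert (0 <= beta / 8 * b' * b) by (apply Rmult_le_pos; [apply Rmult_le_pos |]; lra).
  assert (0 <= g2 * L * a * b) by (repeat apply Rmult_le_pos; lra).
  destruct (Rle_lt_dec b' (L * a)) as [Hsmall | Hlarge].
  - assert (g2 * b' * b <= g2 * L * a * b).
    { rewrite (Rmult_assoc g2 L a). apply Rmult_le_compat_r; [lra |].
      apply Rmult_le_compat_l; lra. }
    lra.
  - assert (Hint := interpolation_below theta L a b' Htheta HL Ha
                      ltac:(nra) (Rlt_le _ _ Hlarge)).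
    rewrite HLe in Hint.
    assert (g3 * (rpow b' (1 - theta) * rpow a theta) <= beta / 8 * b').
    { apply (Rmult_le_reg_r (8 / beta)); [apply Rdiv_lt_0_compat; lra |].
      replace (g3 * (rpow b' (1 - theta) * rpow a theta) * (8 / beta))
        with (rpow b' (1 - theta) * rpow a theta * (8 * g3 / beta)) by (field; lra).
      replace (beta / 8 * b' * (8 / beta)) with b' by (field; lra). exact Hint. }
    assert (g3 * b * rpow b' (1 - theta) * rpow a theta <= beta / 8 * b' * b)
      by (replace (g3 * b * rpow b' (1 - theta) * rpow a theta)
            with (g3 * (rpow b' (1 - theta) * rpow a theta) * b) by ring;
          apply Rmult_le_compat_r; lra).
    lra.
Qed.

Lemma energy_step beta L :
  0 < beta -> 0 < L -> Rpower L theta = 8 * g3 / beta -> beta * b ^ 2 <= D ->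
  a ^ 2 + k * beta / 4 * b ^ 2 + k * beta / 2 * b ^ 2
  <= a' ^ 2 + k * beta / 4 * b' ^ 2 + k * (4 / beta * r ^ 2 + s ^ 2)
     + k * (4 / beta * (g2 * L) ^ 2) * a ^ 2.
Proof.
  intros Hbeta HL HLe HD.
  assert (Hc := coupling_bound beta L Hbeta HL HLe).
  assert (Yr := young (beta / 8) b r ltac:(lra)).
  assert (Ya := young (beta / 8) b (g2 * L * a) ltac:(lra)).
  assert (Yb := young 1 b' b ltac:(lra)).
  replace (/ (2 * (beta / 8))) with (4 / beta) in Yr, Ya by (field; lra).
  (* after Young's inequality, 3/16 of beta b^2 is spent on the coupling *)
  set (u := (a ^ 2 - a' ^ 2) / k) in Hc.
  assert (Hu : u <= 3 * beta / 16 * b ^ 2 + beta / 16 * b' ^ 2 + 4 / beta * r ^ 2 + s ^ 2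
                    + 4 / beta * (g2 * L) ^ 2 * a ^ 2 - beta * b ^ 2).
  { assert (b * (g2 * L * a) = g2 * L * a * b) by ring.
    assert ((g2 * L * a) ^ 2 = (g2 * L) ^ 2 * a ^ 2) by ring.
    assert (beta / 8 * b' * b = beta / 8 * (b' * b)) by ring. nra. }
  assert (Hku : a ^ 2 - a' ^ 2 = k * u) by (unfold u; field; lra).
  assert (k * u <= k * (3 * beta / 16 * b ^ 2 + beta / 16 * b' ^ 2 + 4 / beta * r ^ 2 + s ^ 2
                    + 4 / beta * (g2 * L) ^ 2 * a ^ 2 - beta * b ^ 2))
    by (apply Rmult_le_compat_l; lra).
  assert (0 <= k * beta * b ^ 2) by (apply Rmult_le_pos; [nra | apply pow2_ge_0]).
  assert (0 <= k * beta * b' ^ 2) by (apply Rmult_le_pos; [nra | apply pow2_ge_0]).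
  nra.
Qed.

Lemma growth_when_b_large p beta B :
  1 < p -> 0 < beta -> 0 < B -> Rpower B (p - 1) = (1 + g2) / beta ->
  b' <= 1 -> r <= 1 -> s ^ 2 <= 1 -> 1 < b ->
  beta * (b * Rpower b (p - 1)) <= D ->
  (a ^ 2 - a' ^ 2) / k <= B * (1 + g2) + 1.
Proof.
  intros Hp Hbeta HB HBe Hb'1 Hr Hs Hb1 HD.
  assert (Habs := superlinear_absorbs p beta (1 + g2) B b Hp Hbeta ltac:(lra) HB HBe ltac:(lra)).
  assert (g2 * b' * b <= g2 * b) by (rewrite Rmult_assoc; apply Rmult_le_compat_l; nra).
  assert (b * r <= b * 1) by (apply Rmult_le_compat_l; lra).
  nra.
Qed.

Lemma step_bounded p beta B tau eps :
  1 < p -> 0 < beta -> 0 < B -> Rpower B (p - 1) = (1 + g2) / beta ->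
  0 < tau -> Rpower tau theta = beta / (5 * g3) ->
  eps <= 1 -> eps <= beta / 5 -> b' <= 1 -> a' ^ 2 <= beta / 5 * k ->
  r <= eps -> s ^ 2 <= eps -> k * (beta / 5 + B * (1 + g2) + 1) < tau ^ 2 ->
  (1 < b -> beta * (b * Rpower b (p - 1)) <= D) ->
  b <= 1.
Proof.
  intros Hp Hbeta HB HBe Htau Htaue He1 He2 Hb'1 Ha' Hr Hs Hk1 HD.
  destruct (Rle_lt_dec b 1) as [| Hb1]; [assumption | exfalso].
  specialize (HD Hb1).
  set (u := (a ^ 2 - a' ^ 2) / k) in *.
  assert (Hku : a ^ 2 - a' ^ 2 = u * k) by (unfold u; field; lra).
  assert (Hgrowth := growth_when_b_large p beta B Hp Hbeta HB HBe Hb'1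
                       ltac:(lra) ltac:(lra) Hb1 HD).
  fold u in Hgrowth.
  (* the growth bound puts  a  below the threshold  tau *)
  assert (Ha_tau : a < tau).
  { assert (u * k <= (B * (1 + g2) + 1) * k) by (apply Rmult_le_compat_r; lra). nra. }
  assert (Hpow : rpow b' (1 - theta) * rpow a theta <= beta / (5 * g3)).
  { rewrite <- Htaue. rewrite <- (Rmult_1_l (Rpower tau theta)).
    apply Rmult_le_compat; [apply rpow_nonneg | apply rpow_nonneg | |].
    - apply rpow_le_one; lra.
    - apply rpow_le_Rpower; lra. }
  assert (Hcoup : g3 * b * rpow b' (1 - theta) * rpow a theta <= beta / 5 * b).
  { replace (g3 * b * rpow b' (1 - theta) * rpow a theta)
      with (g3 * (rpow b' (1 - theta) * rpow a theta) * b) by ring.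
    apply Rmult_le_compat_r; [lra |].
    replace (beta / 5) with (g3 * (beta / (5 * g3))) by (field; lra).
    apply Rmult_le_compat_l; lra. }
  assert (Hu : - (beta / 5) <= u).
  { apply (Rmult_le_reg_r k); [lra |]. pose proof (pow2_ge_0 a). lra. }
  assert (1 <= Rpower b (p - 1))
    by (rewrite <- (Rpower_one_l (p - 1)) at 1; apply Rle_Rpower_l; lra).
  assert (b * r <= b * (beta / 5)) by (apply Rmult_le_compat_l; lra).
  assert (beta * b <= beta * (b * Rpower b (p - 1))) by (apply Rmult_le_compat_l; nra).
  assert (beta < beta * b) by nra.
  lra.
Qed.

End OneStep.

Fixpoint sum1 (f : nat -> R) (n : nat) : R :=
  match n with O => 0 | S n => sum1 f n + f (S n) end.

Lemma sum1_nonneg f n : (forall j, 0 <= f j) -> 0 <= sum1 f n.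
Proof. intros Hf; induction n; simpl; [lra |]. specialize (Hf (S n)); lra. Qed.

Lemma sum1_scale c f n : sum1 (fun j => c * f j) n = c * sum1 f n.
Proof. induction n; simpl; [ring |]. rewrite IHn; ring. Qed.

Lemma sum1_plus f g n : sum1 (fun j => f j + g j) n = sum1 f n + sum1 g n.
Proof. induction n; simpl; [ring |]. rewrite IHn; ring. Qed.

Lemma sum1_sum_f_R0 f n : sum1 f n + f 0%nat = sum_f_R0 f n.
Proof. induction n; simpl; lra. Qed.

Lemma sum_f_R0_mono f n M :
  (forall j, 0 <= f j) -> (n <= M)%nat -> sum_f_R0 f n <= sum_f_R0 f M.
Proof. intros Hf H. induction H; [lra |]. simpl. specialize (Hf (S m)). lra. Qed.

Lemma sum1_le_sum_f_R0 f n M :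
  (forall j, 0 <= f j) -> (n <= M)%nat -> sum1 f n <= sum_f_R0 f M.
Proof.
  intros Hf H. rewrite <- (sum_f_R0_mono f n M Hf H), <- sum1_sum_f_R0.
  specialize (Hf 0%nat). lra.
Qed.

Lemma term_le_sum_f_R0 f j M :
  (forall i, 0 <= f i) -> (j <= M)%nat -> f j <= sum_f_R0 f M.
Proof.
  intros Hf H. induction M as [| M IH].
  - replace j with 0%nat by lia. simpl; lra.
  - simpl. destruct (Nat.eq_dec j (S M)) as [-> | Hne].
    + pose proof (cond_pos_sum f M Hf). lra.
    + specialize (Hf (S M)). pose proof (IH ltac:(lia)). lra.
Qed.

Lemma sum_f_from1 f M : (1 <= M)%nat -> sum_f 1 M f = sum1 f M.
Proof.
  intros H. destruct M as [| n]; [lia |]. unfold sum_f.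
  replace (S n - 1)%nat with n by lia. clear H.
  induction n; simpl; [replace (0 + 1)%nat with 1%nat by lia; lra |].
  rewrite IHn. replace (S (n + 1)) with (S (S n)) by lia. simpl. ring.
Qed.

Lemma max_from1_le f M B :
  (1 <= M)%nat -> (forall j, (1 <= j <= M)%nat -> f j <= B) -> max_from1 f M <= B.
Proof.
  intros HM H. induction M as [| n IH]; [lia |].
  destruct n as [| n']; simpl.
  - apply H; lia.
  - apply Rmax_lub; [apply IH; [lia | intros; apply H; lia] | apply H; lia].
Qed.

Lemma telescope_le (Y D G : nat -> R) n :
  (forall j, (1 <= j <= n)%nat -> Y j + D j <= Y (j - 1)%nat + G j) ->
  Y n + sum1 D n <= Y 0%nat + sum1 G n.
Proof.
  induction n as [| n IH]; intros Hstep; simpl; [lra |].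
  assert (Hlast := Hstep (S n) ltac:(lia)). replace (S n - 1)%nat with n in Hlast by lia.
  assert (Y n + sum1 D n <= Y 0%nat + sum1 G n) by (apply IH; intros; apply Hstep; lia).
  lra.
Qed.

Lemma discrete_gronwall (Y : nat -> R) (F x : R) n :
  0 <= x <= 1 / 2 -> 0 <= F -> (forall j, 0 <= Y j) ->
  (forall j, (1 <= j <= n)%nat -> Y j <= F + x * sum1 Y j) ->
  F + x * sum1 Y n <= F * exp (2 * x * INR n).
Proof.
  intros Hx HF HY. induction n as [| n IH]; intros Hhyp.
  - simpl. rewrite Rmult_0_r, Rmult_0_r, exp_0. lra.
  - assert (Hprev : F + x * sum1 Y n <= F * exp (2 * x * INR n))
      by (apply IH; intros; apply Hhyp; lia).
    assert (Hnew := Hhyp (S n) ltac:(lia)). simpl in Hnew.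
    change (sum1 Y (S n)) with (sum1 Y n + Y (S n)).
    set (Z := F + x * sum1 Y n) in *.
    assert (HZ : 0 <= Z) by (pose proof (sum1_nonneg Y n HY); unfold Z; nra).
    (* the new term is at most twice the previous bound, since x <= 1/2 *)
    assert (Hlast : Y (S n) <= 2 * Z).
    { assert ((1 - x) * Y (S n) <= Z) by (unfold Z; lra).
      assert (0 <= (1 / 2 - x) * Y (S n)) by (apply Rmult_le_pos; [lra | apply HY]). lra. }
    assert (Hstep : F + x * (sum1 Y n + Y (S n)) <= (1 + 2 * x) * Z) by (unfold Z in *; nra).
    replace (2 * x * INR (S n)) with (2 * x * INR n + 2 * x) by (rewrite S_INR; ring).
    rewrite exp_plus.
    pose proof (exp_ineq1_le (2 * x)). pose proof (exp_pos (2 * x)).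
    pose proof (exp_pos (2 * x * INR n)). nra.
Qed.

(** * Choice of the constants *)

Section Estimate.
Variables p T g0 g1 g2 g3 Lam theta : R.
Hypotheses (hp1 : 1 < p) (hp2 : p <= 2) (hT : 0 < T)
  (hg0 : 0 < g0) (hg1 : 0 < g1) (hg2 : 0 < g2) (hg3 : 0 < g3) (hLam : 0 < Lam)
  (hth0 : 0 < theta) (hth1 : theta <= 1).

(* coercivity constant of the dissipation on [0, 1] *)
Definition beta : R := g1 * Rpower (Lam + 1) (p - 2).
(* cut-off between the two coupling estimates:  Lcut^theta = 8 g3 / beta *)
Definition Lcut : R := Rpower (8 * g3 / beta) (/ theta).
(* growth rate of the energy *)
Definition Q : R := 4 / beta * (g2 * Lcut) ^ 2.
(* size of the initial energy and of the data, in units of h^2 *)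
Definition C0 : R := g0 * (2 + beta / 4 + 4 / beta).
Definition growth_factor : R := exp (2 * Q * T).
(* level above which the dissipation absorbs linear terms *)
Definition Bcut : R := Rpower ((1 + g2) / beta) (/ (p - 1)).
(* threshold for a below which the interpolation term is small *)
Definition tau : R := Rpower (beta / (5 * g3)) (/ theta).
(* smallness of a single data term *)
Definition eps : R := Rmin 1 (beta / 5).

(* admissible time steps: kQ <= 1/2 for the Gronwall lemma, and k small
   enough for the a priori bound b <= 1 *)
Definition kbar : R := Rmin 1 (Rmin (1 / (2 * Q)) (tau ^ 2 / (beta / 5 + Bcut * (1 + g2) + 1))).
(* admissible ratio h^2/k: makes single data terms and a_{m-1}^2 / k small *)
Definition g0bar : R := Rmin (eps ^ 2 / g0) (beta / 5 / (C0 * growth_factor)).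
(* constant of the final estimate (the rate g5 is Q) *)
Definition g4 : R := C0 * (1 + 2 * g1 * Rpower Lam (p - 2) / beta).

Lemma beta_pos : 0 < beta.
Proof. apply Rmult_lt_0_compat; [lra | apply Rpower_pos]. Qed.

Lemma Lcut_spec : Rpower Lcut theta = 8 * g3 / beta.
Proof. apply Rpower_root; [apply Rdiv_lt_0_compat; [lra | exact beta_pos] | lra]. Qed.

Lemma Bcut_spec : Rpower Bcut (p - 1) = (1 + g2) / beta.
Proof. apply Rpower_root; [apply Rdiv_lt_0_compat; [lra | exact beta_pos] | lra]. Qed.

Lemma tau_spec : Rpower tau theta = beta / (5 * g3).
Proof. apply Rpower_root; [apply Rdiv_lt_0_compat; [exact beta_pos | lra] | lra]. Qed.

Lemma Q_pos : 0 < Q.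
Proof.
  pose proof beta_pos. pose proof (Rpower_pos (8 * g3 / beta) (/ theta)).
  apply Rmult_lt_0_compat; [apply Rdiv_lt_0_compat; lra | apply pow_lt; unfold Lcut; nra].
Qed.

Lemma C0_pos : 0 < C0.
Proof.
  pose proof beta_pos. assert (0 < 4 / beta) by (apply Rdiv_lt_0_compat; lra).
  apply Rmult_lt_0_compat; lra.
Qed.

Lemma eps_spec : 0 < eps /\ eps <= 1 /\ eps <= beta / 5.
Proof.
  pose proof beta_pos. unfold eps.
  split; [apply Rmin_pos; lra | split; [apply Rmin_l | apply Rmin_r]].
Qed.

Lemma constants_spec : 0 < kbar /\ kbar <= 1 /\ 0 < g0bar /\ 0 < g4 /\ 0 < Q.
Proof.
  pose proof beta_pos. pose proof Q_pos. pose proof C0_pos. pose proof eps_spec.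
  pose proof (Rpower_pos ((1 + g2) / beta) (/ (p - 1))).
  pose proof (Rpower_pos (beta / (5 * g3)) (/ theta)).
  pose proof (exp_pos (2 * Q * T)). pose proof (Rpower_pos Lam (p - 2)).
  unfold kbar, g0bar, g4, Bcut, tau, growth_factor in *.
  repeat split; try apply Rmin_l; try exact Q_pos.
  - repeat apply Rmin_pos; try lra; apply Rdiv_lt_0_compat; nra.
  - apply Rmin_pos; apply Rdiv_lt_0_compat; nra.
  - apply Rmult_lt_0_compat; [lra |].
    assert (0 < 2 * g1 * Rpower Lam (p - 2) / beta) by (apply Rdiv_lt_0_compat; nra). lra.
Qed.

Section Scheme.
Variables (M : nat) (k h lam : R) (a b r s : nat -> R).
Hypotheses (HM : (1 <= M)%nat) (Hk : k = T / INR M) (Hk0 : 0 < k) (Hkbar : k < kbar)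
  (Hh : 0 < h) (Hh0 : h < 1 / sqrt g0) (Hhk : h ^ 2 < g0bar * k)
  (Hlam0 : 0 <= lam) (HlamL : lam <= Lam)
  (Ha : forall m, (m <= M)%nat -> 0 <= a m) (Hb : forall m, (m <= M)%nat -> 0 <= b m)
  (Ha0 : a 0%nat ^ 2 <= g0 * h ^ 2) (Hb0 : b 0%nat ^ 2 <= g0 * h ^ 2)
  (Hr : k * sum_f_R0 (fun m => r m ^ 2) M <= g0 * h ^ 2)
  (Hs : k * sum_f_R0 (fun m => s m ^ 2) M <= g0 * h ^ 2).
Hypothesis I1 : forall m, (1 <= m <= M)%nat ->
  (a m ^ 2 - a (m - 1)%nat ^ 2) / k + g1 * rpow (lam + b m) (p - 2) * b m ^ 2
  <= b m * r m + g2 * b (m - 1)%nat * b m + s m ^ 2.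
Hypothesis I2 : forall m, (1 <= m <= M)%nat ->
  (a m ^ 2 - a (m - 1)%nat ^ 2) / k + g1 * rpow (lam + b m) (p - 2) * b m ^ 2
  <= b m * r m + g3 * b m * rpow (b (m - 1)%nat) (1 - theta) * rpow (a m) theta + s m ^ 2.

Let Y (j : nat) : R := a j ^ 2 + k * beta / 4 * b j ^ 2.
Let Rdata (j : nat) : R := 4 / beta * r j ^ 2 + s j ^ 2.

Lemma k_small : k <= 1 /\ k * Q <= 1 / 2 /\
  k * (beta / 5 + Bcut * (1 + g2) + 1) < tau ^ 2.
Proof.
  pose proof Q_pos. pose proof beta_pos.
  assert (HK : 0 < beta / 5 + Bcut * (1 + g2) + 1)
    by (pose proof (Rpower_pos ((1 + g2) / beta) (/ (p - 1))); fold Bcut in *; nra).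
  unfold kbar in Hkbar.
  pose proof (Rmin_l 1 (Rmin (1 / (2 * Q)) (tau ^ 2 / (beta / 5 + Bcut * (1 + g2) + 1)))).
  pose proof (Rmin_r 1 (Rmin (1 / (2 * Q)) (tau ^ 2 / (beta / 5 + Bcut * (1 + g2) + 1)))).
  pose proof (Rmin_l (1 / (2 * Q)) (tau ^ 2 / (beta / 5 + Bcut * (1 + g2) + 1))).
  pose proof (Rmin_r (1 / (2 * Q)) (tau ^ 2 / (beta / 5 + Bcut * (1 + g2) + 1))).
  split; [lra | split].
  - assert (k * (2 * Q) <= 1) by (apply le_div_mul; lra). lra.
  - apply lt_div_mul; lra.
Qed.

Lemma h_small : g0 * h ^ 2 < 1.
Proof.
  assert (Hsq : 0 < sqrt g0) by (apply sqrt_lt_R0; lra).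
  assert (h * sqrt g0 < 1).
  { apply (Rmult_lt_compat_r (sqrt g0)) in Hh0; [| lra].
    replace (1 / sqrt g0 * sqrt g0) with 1 in Hh0 by (field; lra). lra. }
  assert (0 < h * sqrt g0) by (apply Rmult_lt_0_compat; lra).
  assert (g0 * h ^ 2 = (h * sqrt g0) * (h * sqrt g0))
    by (rewrite <- (sqrt_sqrt g0) at 1 by lra; ring).
  nra.
Qed.

Lemma data_term_small f j :
  (j <= M)%nat -> k * sum_f_R0 (fun m => f m ^ 2) M <= g0 * h ^ 2 -> f j ^ 2 < eps ^ 2.
Proof.
  intros Hj Hf. pose proof eps_spec.
  assert (f j ^ 2 <= sum_f_R0 (fun m => f m ^ 2) M)
    by (apply (term_le_sum_f_R0 (fun m => f m ^ 2)); [intros; apply pow2_ge_0 | exact Hj]).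
  assert (g0bar <= eps ^ 2 / g0) by apply Rmin_l.
  assert (g0bar * g0 <= eps ^ 2) by (apply le_div_mul; lra).
  nra.
Qed.

Lemma data_bound n : (n <= M)%nat -> Y 0%nat + k * sum1 Rdata n <= C0 * h ^ 2.
Proof.
  intros Hn. pose proof beta_pos. pose proof k_small as [Hk1 _].
  unfold Rdata. rewrite sum1_plus, !sum1_scale.
  assert (k * sum1 (fun j => r j ^ 2) n <= g0 * h ^ 2).
  { assert (sum1 (fun j => r j ^ 2) n <= sum_f_R0 (fun m => r m ^ 2) M)
      by (apply sum1_le_sum_f_R0; [intros; apply pow2_ge_0 | exact Hn]). nra. }
  assert (k * sum1 (fun j => s j ^ 2) n <= g0 * h ^ 2).
  { assert (sum1 (fun j => s j ^ 2) n <= sum_f_R0 (fun m => s m ^ 2) M)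
      by (apply sum1_le_sum_f_R0; [intros; apply pow2_ge_0 | exact Hn]). nra. }
  assert (k * b 0%nat ^ 2 <= g0 * h ^ 2) by (pose proof (pow2_ge_0 (b 0%nat)); nra).
  assert (H4 : 0 < 4 / beta) by (apply Rdiv_lt_0_compat; lra).
  unfold Y, C0. nra.
Qed.

Lemma Y_nonneg j : 0 <= Y j.
Proof.
  pose proof beta_pos. pose proof (pow2_ge_0 (a j)). pose proof (pow2_ge_0 (b j)).
  unfold Y. assert (0 <= k * beta * b j ^ 2) by (apply Rmult_le_pos; nra). nra.
Qed.

Lemma a_le_Y j : a j ^ 2 <= Y j.
Proof.
  pose proof beta_pos. pose proof (pow2_ge_0 (b j)).
  unfold Y. assert (0 <= k * beta * b j ^ 2) by (apply Rmult_le_pos; nra). nra.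
Qed.

Lemma energy_sum n :
  (n <= M)%nat -> (forall j, (1 <= j <= n)%nat -> b j <= 1) ->
  Y n + k * beta / 2 * sum1 (fun j => b j ^ 2) n <= C0 * h ^ 2 + k * Q * sum1 Y n.
Proof.
  intros Hn Hb1. pose proof beta_pos.
  assert (Htel : Y n + sum1 (fun j => k * beta / 2 * b j ^ 2) n
                 <= Y 0%nat + sum1 (fun j => k * Rdata j + k * Q * Y j) n).
  { apply telescope_le. intros j Hj.
    assert (HjM : (j <= M)%nat) by lia.
    assert (Hcoer : beta * b j ^ 2 <= g1 * rpow (lam + b j) (p - 2) * b j ^ 2).
    { unfold beta. rewrite !Rmult_assoc. apply Rmult_le_compat_l; [lra |].
      apply coercive_small; [lra | lra | split; [apply Hb | apply Hb1]; lia]. }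
    assert (Hstep := energy_step g2 g3 theta k (a j) (a (j - 1)%nat) (b j) (b (j - 1)%nat)
                       (r j) (s j) _ hg2 (conj hth0 hth1) Hk0 (Ha j HjM) (Hb j HjM)
                       (Hb (j - 1)%nat ltac:(lia)) (I1 j ltac:(lia)) (I2 j ltac:(lia)) beta Lcut beta_pos
                       (Rpower_pos _ _) Lcut_spec Hcoer).
    change (4 / beta * (g2 * Lcut) ^ 2) with Q in Hstep.
    assert (k * Q * a j ^ 2 <= k * Q * Y j)
      by (apply Rmult_le_compat_l; [pose proof Q_pos; nra | apply a_le_Y]).
    unfold Y, Rdata in *. lra. }
  rewrite sum1_scale, sum1_plus, !sum1_scale in Htel.
  pose proof (data_bound n Hn). lra.
Qed.

Lemma energy_estimate n :
  (n <= M)%nat -> (forall j, (1 <= j <= n)%nat -> b j <= 1) ->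
  Y n + k * beta / 2 * sum1 (fun j => b j ^ 2) n <= C0 * h ^ 2 * exp (2 * (k * Q) * INR n).
Proof.
  intros Hn Hb1. pose proof k_small as [_ [HkQ _]]. pose proof Q_pos. pose proof C0_pos.
  assert (Hgron : C0 * h ^ 2 + k * Q * sum1 Y n <= C0 * h ^ 2 * exp (2 * (k * Q) * INR n)).
  { apply discrete_gronwall; [split; nra | pose proof (pow2_ge_0 h); nra | exact Y_nonneg |].
    intros j Hj.
    assert (Hsum := energy_sum j ltac:(lia) ltac:(intros; apply Hb1; lia)).
    assert (0 <= k * beta / 2 * sum1 (fun i => b i ^ 2) j).
    { pose proof beta_pos. pose proof (sum1_nonneg (fun i => b i ^ 2) j (fun i => pow2_ge_0 _)).
      apply Rmult_le_pos; [apply Rmult_le_pos |]; nra. }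
    rewrite Rmult_assoc in Hsum. lra. }
  pose proof (energy_sum n Hn Hb1). lra.
Qed.

Lemma growth_uniform n : (n <= M)%nat -> exp (2 * (k * Q) * INR n) <= growth_factor.
Proof.
  intros Hn. pose proof Q_pos. unfold growth_factor. apply exp_le_mono.
  assert (HkT : k * INR n <= T).
  { assert (INR n <= INR M) by (apply le_INR; lia).
    assert (0 < INR M) by (apply lt_0_INR; lia).
    rewrite Hk. replace T with (T / INR M * INR M) at 2 by (field; lra).
    apply Rmult_le_compat_l; [apply Rlt_le, Rdiv_lt_0_compat |]; lra. }
  nra.
Qed.

(* While b stays below 1, the amplitude is O(k), since  h^2 < g0bar k;
   this is the smallness of the previous state needed in [step_bounded]. *)
Lemma amplitude_small n :
  (n <= M)%nat -> (forall j, (1 <= j <= n)%nat -> b j <= 1) -> a n ^ 2 <= beta / 5 * k.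
Proof.
  intros Hn Hb1. pose proof beta_pos. pose proof C0_pos.
  assert (HG : 0 < growth_factor) by apply exp_pos.
  pose proof (energy_estimate n Hn Hb1). pose proof (growth_uniform n Hn).
  pose proof (a_le_Y n).
  pose proof (sum1_nonneg (fun i => b i ^ 2) n (fun i => pow2_ge_0 _)).
  assert (0 <= k * beta / 2 * sum1 (fun i => b i ^ 2) n)
    by (apply Rmult_le_pos; [apply Rmult_le_pos |]; nra).
  assert (C0 * h ^ 2 * exp (2 * (k * Q) * INR n) <= C0 * h ^ 2 * growth_factor)
    by (apply Rmult_le_compat_l; [pose proof (pow2_ge_0 h) |]; nra).
  assert (g0bar * (C0 * growth_factor) <= beta / 5)
    by (apply le_div_mul; [nra | apply Rmin_r]).
  assert (C0 * growth_factor * h ^ 2 <= C0 * growth_factor * (g0bar * k))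
    by (apply Rmult_le_compat_l; nra).
  nra.
Qed.

Lemma b_le_one : forall n, (n <= M)%nat -> forall j, (1 <= j <= n)%nat -> b j <= 1.
Proof.
  induction n as [| n IH]; intros Hn j Hj; [lia |].
  destruct (Nat.eq_dec j (S n)) as [-> | Hne]; [| apply IH; lia].
  assert (Hprev := IH ltac:(lia)).
  pose proof beta_pos. pose proof eps_spec as [He0 [He1 He2]].
  assert (Ha_prev := amplitude_small n ltac:(lia) Hprev).
  assert (Hb_prev : b n <= 1).
  { destruct n as [| n']; [| apply Hprev; lia].
    pose proof h_small. pose proof (Hb 0%nat ltac:(lia)). nra. }
  assert (Hr1 : r (S n) <= eps).
  { pose proof (data_term_small r (S n) Hn Hr). nra. }
  assert (Hs1 : s (S n) ^ 2 <= eps).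
  { pose proof (data_term_small s (S n) Hn Hs). nra. }
  pose proof (I1 (S n) ltac:(lia)) as I1n. pose proof (I2 (S n) ltac:(lia)) as I2n.
  replace (S n - 1)%nat with n in I1n, I2n by lia.
  pose proof k_small as [_ [_ HkK]].
  apply (step_bounded g2 g3 theta k (a (S n)) (a n) (b (S n)) (b n) (r (S n)) (s (S n)) _
           hg2 hg3 (conj hth0 hth1) Hk0 (Ha _ Hn) (Hb _ Hn) (Hb n ltac:(lia)) I1n I2n
           p beta Bcut tau eps); try lra.
  - apply Rpower_pos.
  - exact Bcut_spec.
  - apply Rpower_pos.
  - exact tau_spec.
  - intros Hbig. pose proof (coercive_large p Lam lam hp2 (conj Hlam0 HlamL) (b (S n))
                                ltac:(lra)).
    unfold beta. rewrite !Rmult_assoc. apply Rmult_le_compat_l; lra.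
Qed.

Lemma scheme_estimate :
  max_from1 b M <= 1 /\
  max_from1 (fun m => a m ^ 2) M
    + g1 * rpow (lam + Lam) (p - 2) * (k * sum_f 1 M (fun m => b m ^ 2))
  <= g4 * h ^ 2 * exp (2 * Q * k * INR M).
Proof.
  pose proof beta_pos. pose proof C0_pos. pose proof Q_pos.
  assert (Hb1 := b_le_one M (le_n M)).
  split; [apply max_from1_le; assumption |].
  set (X := exp (2 * Q * k * INR M)).
  assert (HX : forall n, (n <= M)%nat -> C0 * h ^ 2 * exp (2 * (k * Q) * INR n) <= C0 * h ^ 2 * X).
  { intros n Hn. apply Rmult_le_compat_l; [pose proof (pow2_ge_0 h); nra |].
    apply exp_le_mono. replace (2 * Q * k * INR M) with (2 * (k * Q) * INR M) by ring.
    apply Rmult_le_compat_l; [nra | apply le_INR; lia]. }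
  assert (HBsum : forall n, 0 <= k * beta / 2 * sum1 (fun i => b i ^ 2) n).
  { intros n. pose proof (sum1_nonneg (fun i => b i ^ 2) n (fun i => pow2_ge_0 _)).
    apply Rmult_le_pos; [apply Rmult_le_pos |]; nra. }
  assert (Hmax : max_from1 (fun m => a m ^ 2) M <= C0 * h ^ 2 * X).
  { apply max_from1_le; [exact HM |]. intros j Hj.
    pose proof (energy_estimate j ltac:(lia) ltac:(intros; apply Hb1; lia)).
    pose proof (HX j ltac:(lia)). pose proof (a_le_Y j). pose proof (HBsum j). lra. }
  assert (Hdiss : k * beta / 2 * sum1 (fun i => b i ^ 2) M <= C0 * h ^ 2 * X).
  { pose proof (energy_estimate M (le_n M) Hb1). pose proof (HX M (le_n M)).
    pose proof (Y_nonneg M). lra. }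
  assert (Hw : g1 * rpow (lam + Lam) (p - 2) <= 2 * g1 * Rpower Lam (p - 2) / beta * (beta / 2)).
  { replace (2 * g1 * Rpower Lam (p - 2) / beta * (beta / 2)) with (g1 * Rpower Lam (p - 2))
      by (field; lra).
    apply Rmult_le_compat_l; [lra |]. rewrite rpow_of_pos by lra. apply Rpower_antitone; lra. }
  rewrite sum_f_from1 by exact HM.
  set (Sb := sum1 (fun i => b i ^ 2) M) in *.
  set (c := 2 * g1 * Rpower Lam (p - 2) / beta) in *.
  assert (0 <= Sb) by apply sum1_nonneg, (fun i => pow2_ge_0 _).
  assert (0 <= c) by (apply Rlt_le, Rdiv_lt_0_compat; [pose proof (Rpower_pos Lam (p - 2)) |]; nra).
  assert (g1 * rpow (lam + Lam) (p - 2) * (k * Sb) <= c * (k * beta / 2 * Sb))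
    by (replace (c * (k * beta / 2 * Sb)) with (c * (beta / 2) * (k * Sb)) by lra;
        apply Rmult_le_compat_r; nra).
  assert (c * (k * beta / 2 * Sb) <= c * (C0 * h ^ 2 * X)) by (apply Rmult_le_compat_l; lra).
  unfold g4. fold c. lra.
Qed.

End Scheme.

End Estimate.

Theorem lemma2 (p T g0 g1 g2 g3 Lam theta : R)
  (hp1 : 1 < p) (hp2 : p <= 2) (hT : 0 < T)
  (hg0 : 0 < g0) (hg1 : 0 < g1) (hg2 : 0 < g2) (hg3 : 0 < g3) (hLam : 0 < Lam)
  (hth0 : 0 < theta) (hth1 : theta <= 1) :
  exists kbar g0bar g4 g5 : R,
    0 < kbar /\ kbar <= 1 /\ 0 < g0bar /\ 0 < g4 /\ 0 < g5 /\
    forall (M : nat) (k h lam : R) (a b r s : nat -> R),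
      (1 <= M)%nat ->
      k = T / INR M -> 0 < k -> k < kbar ->
      0 < h -> h < 1 / sqrt g0 -> h ^ 2 < g0bar * k ->
      0 <= lam -> lam <= Lam ->
      (forall m, (m <= M)%nat -> 0 <= a m) ->
      (forall m, (m <= M)%nat -> 0 <= b m) ->
      a 0%nat ^ 2 <= g0 * h ^ 2 ->
      b 0%nat ^ 2 <= g0 * h ^ 2 ->
      k * sum_f_R0 (fun m => r m ^ 2) M <= g0 * h ^ 2 ->
      k * sum_f_R0 (fun m => s m ^ 2) M <= g0 * h ^ 2 ->
      (forall m, (1 <= m <= M)%nat ->
         (a m ^ 2 - a (m - 1)%nat ^ 2) / k
           + g1 * rpow (lam + b m) (p - 2) * b m ^ 2
         <= b m * r m + g2 * b (m - 1)%nat * b m + s m ^ 2) ->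
      (forall m, (1 <= m <= M)%nat ->
         (a m ^ 2 - a (m - 1)%nat ^ 2) / k
           + g1 * rpow (lam + b m) (p - 2) * b m ^ 2
         <= b m * r m
            + g3 * b m * rpow (b (m - 1)%nat) (1 - theta) * rpow (a m) theta
            + s m ^ 2) ->
      max_from1 b M <= 1 /\
      max_from1 (fun m => a m ^ 2) M
        + g1 * rpow (lam + Lam) (p - 2) * (k * sum_f 1 M (fun m => b m ^ 2))
      <= g4 * h ^ 2 * exp (2 * g5 * k * INR M).
Proof.
  destruct (constants_spec p T g0 g1 g2 g3 Lam theta hg0 hg1 hg2 hth0 hth1)
    as (Hkbar0 & Hkbar1 & Hg0bar & Hg4 & HQ).
  exists (kbar p g1 g2 g3 Lam theta), (g0bar p T g0 g1 g2 g3 Lam theta),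
    (g4 p g0 g1 Lam), (Q p g1 g2 g3 Lam theta).
  do 5 (split; [assumption |]).
  exact (scheme_estimate p T g0 g1 g2 g3 Lam theta hp1 hp2 hT hg0 hg1 hg2 hg3 hLam hth0 hth1).
Qed.
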